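(* Let $T$ be a tree. If $F$ is a minimal fort of $T$, then $F$ does not contain three distinct vertices $a, b, c$ with $a \sim b$ and $b \sim c$.
   Context: $u \sim v$ means $u$ and $v$ are adjacent. A fort of a graph $G$ is a nonempty set $F\subseteq V(G)$ such that every vertex outside $F$ is adjacent to either zero or at least two vertices of $F$; it is minimal if no proper subset is a fort. *)

From mathcomp Require Import all_boot.
Set Implicit Arguments. Unset Strict Implicit. Unset Printing Implicit Defensive.

Definition simple_graph (V : finType) (e : rel V) : Prop :=
  symmetric e /\ irreflexive e.

Definition connected_graph (V : finType) (e : rel V) : Prop :=
  forall x y : V, connect e x y.

Definition is_cycle (V : finType) (e : rel V) (c : seq V) : Prop :=
  3 <= size c /\ uniq c /\ cycle e c.

Definition acyclic (V : finType) (e : rel V) : Prop :=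
  forall c : seq V, ~ is_cycle e c.

Definition tree (V : finType) (e : rel V) : Prop :=
  simple_graph e /\ connected_graph e /\ acyclic e.

Definition nbrs_in (V : finType) (e : rel V) (F : {set V}) (v : V) : nat :=
  #|[set u in F | e v u]|.

Definition fort (V : finType) (e : rel V) (F : {set V}) : Prop :=
  F != set0 /\
  forall v : V, v \notin F -> nbrs_in e F v = 0 \/ 2 <= nbrs_in e F v.

Definition minimal_fort (V : finType) (e : rel V) (F : {set V}) : Prop :=
  fort e F /\ forall F' : {set V}, F' \proper F -> ~ fort e F'.

From mathcomp Require Import all_boot.
Set Implicit Arguments. Unset Strict Implicit. Unset Printing Implicit Defensive.

(* Let b be a vertex of a minimal fort F of a forest, and let D be the union of
   the components of the forest minus b that contain an F-neighbour of b.  A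
   vertex of D outside F is not adjacent to b, since the edge would close a
   cycle through b; hence F :&: D is again a fort as soon as b has two
   neighbours in F.  It misses b, contradicting minimality, so every vertex
   of F has at most one neighbour in F. *)

Definition del_vertex (V : finType) (e : rel V) (b : V) : rel V :=
  [rel x y | [&& e x y, x != b & y != b]].

Definition nbr_branches (V : finType) (e : rel V) (F : {set V}) (b : V) :=
  [set x | [exists u, [&& u \in F, e b u & connect (del_vertex e b) u x]]].

Section Branches.

Variables (V : finType) (e : rel V).
Hypotheses (esym : symmetric e) (eirr : irreflexive e).

Lemma path_del_vertex_notin (b x : V) (p : seq V) :
  path (del_vertex e b) x p -> b \notin p.
Proof.
elim: p x => [|y p IH] x //= /andP[/and3P[_ _ yb] /IH bp].
by rewrite in_cons negb_or eq_sym yb bp.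
Qed.

Lemma connect_del_vertex_neq (b x y : V) :
  x != b -> connect (del_vertex e b) x y -> y != b.
Proof.
move=> xb /connectP[p bp ->]; case: p bp => [|z p] bp //=.
by apply/eqP => lb; move: (path_del_vertex_notin bp); rewrite -lb mem_last.
Qed.

Lemma nbr_neq (b u : V) : e b u -> u != b.
Proof. by apply: contraTneq => ->; rewrite eirr. Qed.

Lemma acyclic_del_vertex_connect (b u v : V) :
  acyclic e -> e b u -> e v b -> connect (del_vertex e b) u v -> u = v.
Proof.
move=> acyc ebu evb /connectP[p bp lp]; apply/eqP/contraT => uv; exfalso.
case: (shortenP bp) lp => p' bp' up' _ lp.
apply: (acyc (b :: u :: p')); split; [|split].
- by case: p' lp {bp' up'} => [|y p'] //= lp; rewrite lp eqxx in uv.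
- rewrite cons_uniq up' andbT in_cons negb_or eq_sym nbr_neq //=.
  exact: path_del_vertex_notin bp'.
- rewrite /= ebu rcons_path -lp evb andbT.
  by apply: sub_path bp' => x y /and3P[].
Qed.

Variables (F : {set V}) (b : V).
Local Notation D := (nbr_branches e F b).

Lemma nbr_branches_notin : b \notin D.
Proof.
rewrite inE; apply/existsPn => u; apply/and3P => -[_ ebu cub].
by move: (connect_del_vertex_neq (nbr_neq ebu) cub); rewrite eqxx.
Qed.

Lemma nbr_in_branches (u : V) : u \in F -> e b u -> u \in D.
Proof. by move=> uF ebu; rewrite inE; apply/existsP; exists u; rewrite uF ebu connect0. Qed.

Lemma nbr_branches_closed (x y : V) : x \in D -> e x y -> y != b -> y \in D.
Proof.
move=> xD exy yb; have xb : x != b by apply: contraTneq xD => ->; apply: nbr_branches_notin.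
move: xD; rewrite !inE => /existsP[u /and3P[uF ebu cux]].
apply/existsP; exists u; rewrite uF ebu.
by apply: connect_trans cux (connect1 _); rewrite /del_vertex /= exy xb yb.
Qed.

Hypothesis acyc : acyclic e.

Lemma nbr_branches_nadj (v : V) : v \in D -> v \notin F -> ~~ e v b.
Proof.
rewrite inE => /existsP[u /and3P[uF ebu cuv]] vF; apply/negP => evb.
by move: vF; rewrite -(acyclic_del_vertex_connect acyc ebu evb cuv) uF.
Qed.

Lemma nbrs_in_branches (v : V) :
  v \notin F -> v \in D -> nbrs_in e (F :&: D) v = nbrs_in e F v.
Proof.
move=> vF vD; apply: eq_card => w; rewrite [LHS]inE [RHS]inE in_setI.
have [evw|] := boolP (e v w); rewrite ?andbF ?andbT //.
case: (w \in F) => //=; apply: nbr_branches_closed (vD) (evw) _.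
by apply: contraTneq evw => ->; apply: nbr_branches_nadj.
Qed.

Lemma nbrs_in_branches_center : nbrs_in e (F :&: D) b = nbrs_in e F b.
Proof.
apply: eq_card => w; rewrite [LHS]inE [RHS]inE in_setI.
case wF: (w \in F); case ebw: (e b w); rewrite ?andbF ?andbT //=.
exact: nbr_in_branches.
Qed.

Lemma nbrs_outside_branches (v : V) :
  v \notin D -> v != b -> nbrs_in e (F :&: D) v = 0.
Proof.
move=> vD vb; apply/eqP; rewrite cards_eq0; apply/eqP/setP => w.
rewrite [LHS]inE in_setI in_set0; apply/negP => /andP[/andP[_ wD] evw].
by move: vD; rewrite (nbr_branches_closed wD) // esym.
Qed.

Lemma fort_nbr_branches :
  fort e F -> 1 < nbrs_in e F b -> fort e (F :&: D).
Proof.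
move=> [_ Ffort] nbrs_gt1; split.
  have [u] : exists u, u \in [set u in F | e b u].
    by apply/set0Pn; rewrite -card_gt0 (ltn_trans _ nbrs_gt1).
  by rewrite inE => /andP[uF ebu]; apply/set0Pn; exists u; rewrite inE uF nbr_in_branches.
move=> v; rewrite inE negb_and.
have [-> _|vb] := eqVneq v b; first by rewrite nbrs_in_branches_center; right.
have [vD|vD _] := boolP (v \in D); last by left; rewrite nbrs_outside_branches.
by rewrite orbF => vF; rewrite nbrs_in_branches //; apply: Ffort.
Qed.

Lemma nbr_branches_proper : b \in F -> F :&: D \proper F.
Proof.
move=> bF; rewrite properE subsetIl /=; apply: contra nbr_branches_notin.
by move/subsetP/(_ b bF); rewrite inE bF.
Qed.

End Branches.

Lemma minimal_fort_forest_nbrs_le1 (V : finType) (e : rel V) (F : {set V}) (b : V) :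
  simple_graph e -> acyclic e -> minimal_fort e F -> b \in F -> nbrs_in e F b <= 1.
Proof.
move=> [esym eirr] acyc [Ffort Fmin] bF; rewrite leqNgt; apply/negP => nbrs_gt1.
apply: (Fmin (F :&: nbr_branches e F b)); first exact: nbr_branches_proper.
exact: fort_nbr_branches.
Qed.

Theorem mainTheorem5 (V : finType) (e : rel V) (F : {set V}) :
  tree e -> minimal_fort e F ->
  ~ (exists a b c : V,
       [/\ a \in F, b \in F, c \in F,
           [/\ a != b, b != c & a != c] &
           e a b /\ e b c]).
Proof.
move=> [[esym eirr] [_ acyc]] Fmin [a [b [c [aF bF cF [_ _ ac] [eab ebc]]]]].
have := minimal_fort_forest_nbrs_le1 (conj esym eirr) acyc Fmin bF.
apply/negP; rewrite -ltnNge; apply: (@leq_trans #|[set a; c]|); first by rewrite cards2 ac.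
apply/subset_leq_card/subsetP => x; rewrite !inE => /orP[] /eqP->.
  by rewrite aF esym.
by rewrite cF.
Qed.
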